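(* Let $A\colon X\to Y$ be a compact linear operator between separable Hilbert spaces with infinite-dimensional range, where $X=L^2(\mathcal{M})$, with singular value decomposition $Ax=\sum_{n=1}^\infty\sigma_n\langle x,v_n\rangle_X u_n$. Let $\eta\ge0$ and suppose that $$\sum_{n=1}^\infty\sigma_n^\eta\|v_n\|_{L^\infty(\mathcal{M})}^2<\infty.$$ Then $V_\eta\subseteq U$, where $$V_\eta=\Big\{y\in Y:\sum_{n=1}^\infty\frac{|\langle y,u_n\rangle_Y|^2}{\sigma_n^{2+\eta}}<\infty\Big\},\qquad U=\Big\{y\in Y:\sum_{n=1}^\infty\frac{|\langle y,u_n\rangle_Y|}{\sigma_n}\|v_n\|_{L^\infty(\mathcal{M})}<\infty\Big\}.$$ Consequently, $A^\dagger y\in L^\infty(\mathcal{M})$ for all $y\in V_\eta$.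
   Context: $\mathcal{M}$ is a measure space. The SVD consists of orthonormal systems $(u_n)$ in $Y$ and $(v_n)$ in $X$ and a non-increasing sequence $(\sigma_n)$ of positive reals with $\sigma_n\to0$. The pseudoinverse is $A^\dagger y=\sum_{n}\sigma_n^{-1}\langle y,u_n\rangle_Y v_n$ for $y$ with $\sum_n\sigma_n^{-2}|\langle y,u_n\rangle_Y|^2<\infty$. *)

From HB Require Import structures.
From mathcomp Require Import all_boot all_order all_algebra.
From mathcomp Require Import all_classical all_reals all_analysis.
Set Implicit Arguments. Unset Strict Implicit. Unset Printing Implicit Defensive.
Import Order.TTheory GRing.Theory Num.Theory.
Import numFieldNormedType.Exports.
Local Open Scope classical_set_scope.
Local Open Scope ring_scope.

(* [inner] is an inner product on the normed space Y inducing its norm.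
   Together with completeness of Y (a completeNormedModType) this makes Y a
   real Hilbert space. *)
Definition is_inner_product (R : realType) (Y : normedModType R)
    (inner : Y -> Y -> R) : Prop :=
  [/\ (forall x y, inner x y = inner y x),
      (forall (a : R) (x y z : Y), inner (a *: x + y) z = a * inner x z + inner y z)
    & (forall x, inner x x = `|x| ^+ 2)].

Definition separable_space (T : topologicalType) : Prop :=
  exists D : set T, countable D /\ dense D.

(* ---------- X = L^2(M) (real-valued, elements represented by functions) ---------- *)
Definition inL2 d (T : measurableType d) (R : realType)
    (mu : {measure set T -> \bar R}) (f : T -> R) : Prop :=
  f \in Lfun mu 2%:E.

Definition L2inner d (T : measurableType d) (R : realType)
    (mu : {measure set T -> \bar R}) (f g : T -> R) : R :=
  Rintegral mu setT (fun x => f x * g x).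

Definition L2norm d (T : measurableType d) (R : realType)
    (mu : {measure set T -> \bar R}) (f : T -> R) : \bar R :=
  Lnorm mu 2%:E (EFin \o f).
Definition Linfnorm d (T : measurableType d) (R : realType)
    (mu : {measure set T -> \bar R}) (f : T -> R) : \bar R :=
  Lnorm mu +oo%E (EFin \o f).

Definition inLinf d (T : measurableType d) (R : realType)
    (mu : {measure set T -> \bar R}) (f : T -> R) : Prop :=
  measurable_fun setT f /\ (Linfnorm mu f < +oo)%E.

Definition L2_separable d (T : measurableType d) (R : realType)
    (mu : {measure set T -> \bar R}) : Prop :=
  exists e : nat -> T -> R, (forall k, inL2 mu (e k)) /\
    forall f, inL2 mu f -> forall eps : R, 0 < eps ->
      exists k, (L2norm mu (f \- e k)%R < eps%:E)%E.

Definition orthonormal_L2 d (T : measurableType d) (R : realType)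
    (mu : {measure set T -> \bar R}) (v : nat -> T -> R) : Prop :=
  (forall n, inL2 mu (v n)) /\
  forall n m, L2inner mu (v n) (v m) = (n == m)%:R.

Definition orthonormal_Y (R : realType) (Y : normedModType R)
    (inner : Y -> Y -> R) (u : nat -> Y) : Prop :=
  forall n m, inner (u n) (u m) = (n == m)%:R.

Definition is_SVD d (T : measurableType d) (R : realType)
    (mu : {measure set T -> \bar R}) (Y : normedModType R)
    (inner : Y -> Y -> R) (A : (T -> R) -> Y)
    (sigma : nat -> R) (u : nat -> Y) (v : nat -> T -> R) : Prop :=
  [/\ (forall n, 0 < sigma n),
      (forall n, sigma n.+1 <= sigma n),
      sigma @ \oo --> (0 : R),
      orthonormal_Y inner u &
      (orthonormal_L2 mu v /\ forall x, inL2 mu x ->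
        (fun N => \sum_(n < N) (sigma n * L2inner mu x (v n)) *: u n)
          @ \oo --> A x)].

Definition V_eta (R : realType) (Y : normedModType R) (inner : Y -> Y -> R)
    (sigma : nat -> R) (u : nat -> Y) (eta : R) : set Y :=
  [set y | (\sum_(0 <= n <oo)
              ((`|inner y (u n)| ^+ 2 / powR (sigma n) (2 + eta))%:E)
            < +oo)%E].

Definition U_set d (T : measurableType d) (R : realType)
    (mu : {measure set T -> \bar R}) (Y : normedModType R)
    (inner : Y -> Y -> R) (sigma : nat -> R) (u : nat -> Y)
    (v : nat -> T -> R) : set Y :=
  [set y | (\sum_(0 <= n <oo)
              ((`|inner y (u n)| / sigma n)%:E * Linfnorm mu (v n))
            < +oo)%E].

Definition is_pinv d (T : measurableType d) (R : realType)
    (mu : {measure set T -> \bar R}) (Y : normedModType R)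
    (inner : Y -> Y -> R) (sigma : nat -> R) (u : nat -> Y)
    (v : nat -> T -> R) (y : Y) (f : T -> R) : Prop :=
  inL2 mu f /\
  (fun N => L2norm mu (f \- (fun x => \sum_(n < N) (sigma n)^-1 * inner y (u n) * v n x))%R)
    @ \oo --> 0%E.

(** Since [sigma_n > 0], the hypothesis makes every [M_n := ||v_n||_oo] finite.
  For [y] in [V_eta], AM-GM with weight [sigma_n^eta] bounds
  [|<y,u_n>| / sigma_n * M_n] by the mean of the [n]-th terms of the two
  convergent series, so [y] lies in [U].  The coefficients
  [a_n = <y,u_n> / sigma_n] are square summable because [sigma_n <= sigma_0],
  and [sum_n |a_n| M_n] is finite because [y] lies in [U].  Hence
  [sum_n a_n v_n] converges absolutely almost everywhere to a function bounded
  by [sum_n |a_n| M_n]; by orthonormality and Fatou's lemma the partial sums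
  also converge to it in [L^2], so every [L^2] limit of the partial sums, in
  particular [A^dagger y], agrees with it almost everywhere. *)

From HB Require Import structures.
From mathcomp Require Import all_boot all_order all_algebra.
From mathcomp Require Import all_classical all_reals all_analysis.
From mathcomp Require Import measurable_realfun lra.
Import Order.TTheory GRing.Theory Num.Theory.
Import numFieldNormedType.Exports.
Local Open Scope classical_set_scope.
Local Open Scope ring_scope.

Section L2_facts.
Context {R : realType} {d : measure_display} {T : measurableType d}
  {mu : {measure set T -> \bar R}}.
Local Open Scope ereal_scope.

Lemma measurable_inL2 {f : T -> R} : inL2 mu f -> measurable_fun setT f.
Proof. by rewrite /inL2 inE => /andP[]; rewrite inE. Qed.

Lemma L2normE (f : T -> R) :
  L2norm mu f = (\int[mu]_x ((f x ^+ 2)%R)%:E) `^ 2^-1.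
Proof.
rewrite /L2norm unlock /=; congr (_ `^ _); apply: eq_integral => x _.
by rewrite /= powR_mulrn ?normr_ge0 // real_normK // num_real.
Qed.

Lemma measurable_sqr_EFin {f : T -> R} : measurable_fun setT f ->
  measurable_fun setT (fun x => ((f x ^+ 2)%R)%:E).
Proof. by move=> mf; apply/measurable_EFinP; exact: measurable_funX. Qed.

Lemma measurable_orthonormal_sum (v : nat -> T -> R) (b : nat -> R) N :
  orthonormal_L2 mu v -> measurable_fun setT (fun x => \sum_(n < N) b n * v n x)%R.
Proof.
move=> [vL2 _]; apply: measurable_sum => n.
by apply: measurable_funM => //; exact: measurable_inL2 (vL2 n).
Qed.

Lemma ae_eq_integral_sqr {f g : T -> R} :
  measurable_fun setT f -> measurable_fun setT g ->
  (\forall x \ae mu, f x = g x) ->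
  \int[mu]_x ((f x ^+ 2)%R)%:E = \int[mu]_x ((g x ^+ 2)%R)%:E.
Proof.
move=> mf mg fg; apply: ae_eq_integral => //; try exact: measurable_sqr_EFin.
by apply: filterS fg => x -> _.
Qed.

Lemma integral_sqr_le_of_cvg (g : nat -> T -> R) (f : T -> R) (c : \bar R) :
  (forall K, measurable_fun setT (g K)) ->
  (forall x, g K x @[K --> \oo] --> f x) ->
  (forall K, \int[mu]_x ((g K x ^+ 2)%R)%:E <= c) ->
  \int[mu]_x ((f x ^+ 2)%R)%:E <= c.
Proof.
move=> mg gf gc; pose h K x := ((g K x ^+ 2)%R)%:E.
have liminf_h x : limn_einf (h^~ x) = ((f x ^+ 2)%R)%:E.
  apply: (cvg_limn_einf_sup _).1; apply: cvg_EFin; first exact: nearW.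
  rewrite /comp /h /= expr2; under eq_fun do rewrite /= expr2.
  exact: cvgM (gf x) (gf x).
have h_ge0 K x : setT x -> 0 <= h K x by move=> _; rewrite lee_fin sqr_ge0.
have := fatou mu measurableT (fun K => measurable_sqr_EFin (mg K)) h_ge0.
under eq_integral do rewrite liminf_h.
move=> /le_trans; apply; rewrite limn_einf_lim.
apply: lime_le; first exact: is_cvg_einfs.
apply: nearW => K; apply: le_trans (ereal_inf_lbound _) (gc K).
by exists K => /=.
Qed.

Lemma integral_sqr_orthonormal_sum (v : nat -> T -> R) (b : nat -> R) K :
  orthonormal_L2 mu v ->
  \int[mu]_x (((\sum_(n < K) b n * v n x) ^+ 2)%R)%:E = (\sum_(n < K) b n ^+ 2)%:E.
Proof.
move=> [vL2 v_orth].
have int_vv n m : mu.-integrable setT (EFin \o (v n \* v m)%R).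
  by apply/Lfun1_integrable/Lfun2_mul_Lfun1; apply: vL2.
have int_bvv n m :
    mu.-integrable setT (fun x => (b n * b m)%:E * (v n x * v m x)%:E).
  exact: integrableZl (int_vv n m).
under eq_integral => x _.
  rewrite expr2 mulr_suml.
  under eq_bigr => n _ do rewrite mulr_sumr.
  rewrite -sumEFin.
  under eq_bigr => n _ do rewrite -sumEFin.
  under eq_bigr => n _ do under eq_bigr => m _ do rewrite mulrACA EFinM.
  over.
rewrite integral_sum //=; last first.
  by move=> n; apply: integrable_sum => // m; exact: int_bvv.
rewrite -sumEFin; apply: eq_bigr => n _; rewrite integral_sum //.
have int_term (m : 'I_K) : \int[mu]_x ((b n * b m)%:E * (v n x * v m x)%:E) =
    (b n * b m * ((n : nat) == m)%:R)%:E.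
  rewrite (integralZl _ (int_vv n m)) // -v_orth /L2inner /Rintegral.
  by rewrite (EFinM (b n * b m)) fineK //; exact: integrable_fin_num (int_vv n m).
under eq_bigr => m _ do rewrite int_term.
rewrite sumEFin; congr EFin.
rewrite (bigD1 n) //= eqxx mulr1 big1 ?addr0 ?expr2 // => m nm.
by rewrite (_ : (n == m :> nat) = false) ?mulr0 // eq_sym; exact/negbTE.
Qed.

Lemma Linfnorm_ae_le {f : T -> R} {M : R} :
  Linfnorm mu f = M%:E -> \forall x \ae mu, (`|f x| <= M)%R.
Proof.
rewrite /Linfnorm unlock; case: ifPn => mu_gt0 fM.
- have := ess_sup_inf.ess_sup_ge mu (abse \o (EFin \o f)).
  by rewrite fM; apply: filterS => x /=; rewrite lee_fin.
- exists setT; split => //; apply/eqP; rewrite eq_le measure_ge0 andbT.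
  by rewrite leNgt.
Qed.

Lemma L2_limit_ae_unique {S : nat -> T -> R} {f g : T -> R} :
  measurable_fun setT f -> measurable_fun setT g ->
  (forall N, measurable_fun setT (S N)) ->
  L2norm mu (f \- S N)%R @[N --> \oo] --> 0 ->
  L2norm mu (g \- S N)%R @[N --> \oo] --> 0 ->
  \forall x \ae mu, f x = g x.
Proof.
move=> mf mg mS fS gS.
have triangle N :
    L2norm mu (f \- g)%R <= L2norm mu (f \- S N)%R + L2norm mu (g \- S N)%R.
  have -> : (f \- g)%R = ((f \- S N) \+ (S N \- g))%R.
    by apply/funext => x /=; rewrite addrA subrK.
  have -> : L2norm mu (g \- S N)%R = L2norm mu (S N \- g)%R.
    by rewrite /L2norm -oppe_Lnorm; congr Lnorm; apply/funext => x /=; rewrite opprB.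
  by apply: minkowski_EFin; rewrite ?ler1n //; exact: measurable_funB.
have fgS : L2norm mu (f \- S N)%R + L2norm mu (g \- S N)%R @[N --> \oo] --> 0.
  by rewrite -[0]adde0; exact: cvgeD.
have fg0 : L2norm mu (f \- g)%R = 0.
  apply/eqP; rewrite eq_le Lnorm_ge0 andbT -(cvg_lim _ fgS) //.
  by apply: lime_ge; [apply/cvg_ex; exists 0 | exact: nearW triangle].
have fg_ae : (EFin \o (f \- g)%R) = \0 %[ae mu].
  apply: Lnorm_eq0_eq0 fg0 => //.
  by apply/measurable_EFinP; exact: measurable_funB.
by apply: filterS fg_ae => x /(_ I) /eqP; rewrite eqe subr_eq0 => /eqP.
Qed.

Lemma inLinf_ae_bounded {f g : T -> R} {B : R} :
  measurable_fun setT f -> (forall x, `|g x| <= B)%R ->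
  (\forall x \ae mu, f x = g x) -> inLinf mu f.
Proof.
move=> mf gB fg; split => //; rewrite /Linfnorm unlock.
case: ifPn => _; last exact: ltry.
apply: (@le_lt_trans _ _ B%:E); last exact: ltry.
by apply/ess_sup_inf.ess_supP; apply: filterS fg => x /= ->; rewrite lee_fin.
Qed.

End L2_facts.

Section bounded_orthonormal_series.
Context {R : realType} {d : measure_display} {T : measurableType d}
  {mu : {measure set T -> \bar R}} {v : nat -> T -> R} {a M : nat -> R}.
Hypotheses (v_orth : orthonormal_L2 mu v) (M_ge0 : forall n, 0 <= M n)
  (v_le_M : forall n, \forall x \ae mu, `|v n x| <= M n)
  (aM_summable : (\sum_(0 <= n <oo) ((`|a n| * M n)%:E) < +oo)%E).

Let S N x := \sum_(n < N) a n * v n x.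
Let E := \bigcap_n [set x | `|v n x| <= M n].
Let B := fine (\sum_(0 <= n <oo) ((`|a n| * M n)%:E))%E.
(* Cutting the partial sums off outside the full-measure set [E], where the
  series converges absolutely, makes [f0] an everywhere limit, bounded by [B]. *)
Let g N x := \1_E x * S N x.
Let f0 x := limn (g ^~ x).

Let measurable_S N : measurable_fun setT (S N).
Proof. exact: measurable_orthonormal_sum v_orth. Qed.

Let measurable_E : measurable E.
Proof.
apply: bigcapT_measurable => n.
have measurable_v : measurable_fun setT (v n).
  by case: v_orth => vL2 _; exact: measurable_inL2 (vL2 n).
have := measurableT_comp (@normr_measurable R _) measurable_v measurableT
  (measurable_itv `]-oo, (M n)]).
by rewrite setTI; congr measurable; apply/seteqP; split => x /=; rewrite in_itv.
Qed.

Let ae_E : \forall x \ae mu, E x.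
Proof. by apply: filterS (ae_foralln v_le_M) => x vx n _; exact: vx. Qed.

Let partial_sum_aM_le N : \sum_(n < N) `|a n| * M n <= B.
Proof.
have aM_ge0 n : (0 <= (`|a n| * M n)%:E)%E by rewrite lee_fin mulr_ge0.
have := @nneseries_lim_ge R (fun n => (`|a n| * M n)%:E) xpredT 0 N.
rewrite sumEFin big_mkord /B -lee_fin fineK; first by apply.
by rewrite ge0_fin_numE ?aM_summable //; exact: nneseries_ge0.
Qed.

Let is_cvg_S x : E x -> cvgn (S ^~ x).
Proof.
move=> Ex; have -> : S ^~ x = series (fun n => a n * v n x).
  by apply/funext => N; rewrite /series /S /= big_mkord.
apply: (@normed_cvg _ R^o); apply: (@series_le_cvg _ _ (fun n => `|a n| * M n)).
- by move=> n; exact: normr_ge0.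
- by move=> n; rewrite mulr_ge0.
- by move=> n /=; rewrite normrM ler_wpM2l //; exact: Ex.
- by apply: nnseries_is_cvg => // n; rewrite mulr_ge0.
Qed.

Let cvg_g x : g N x @[N --> \oo] --> f0 x.
Proof.
rewrite /f0 /g; have [Ex|nEx] := pselect (E x).
- by under eq_fun do rewrite indicE mem_set // mul1r; exact: is_cvg_S.
- by under eq_fun do rewrite indicE memNset // mul0r; exact: is_cvg_cst.
Qed.

Let g_bounded N x : `|g N x| <= B.
Proof.
rewrite /g indicE; have [Ex|nEx] := pselect (E x).
- rewrite mem_set // mul1r; apply: le_trans (partial_sum_aM_le N).
  apply: le_trans (ler_norm_sum _ _ _) _; apply: ler_sum => n _.
  by rewrite normrM ler_wpM2l //; exact: Ex.
- rewrite memNset // mul0r normr0 fine_ge0 //; apply: nneseries_ge0 => n _ _.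
  by rewrite lee_fin mulr_ge0.
Qed.

Let f0_bounded x : `|f0 x| <= B.
Proof.
have g_itv N : - B <= g N x <= B by rewrite -ler_norml.
rewrite ler_norml; apply/andP; split.
- by apply: limr_ge; [exact: cvg_g | apply: nearW => N; case/andP: (g_itv N)].
- by apply: limr_le; [exact: cvg_g | apply: nearW => N; case/andP: (g_itv N)].
Qed.

Let measurable_g N : measurable_fun setT (g N).
Proof. exact: measurable_funM (measurable_indic measurable_E) (measurable_S N). Qed.

Let measurable_f0 : measurable_fun setT f0.
Proof. by apply: (measurable_fun_cvg measurable_g) => x _; exact: cvg_g. Qed.

Let ae_g_eq_S N : \forall x \ae mu, g N x = S N x.
Proof. by apply: filterS ae_E => x Ex; rewrite /g indicE mem_set // mul1r. Qed.

Let S_addn_sub N K x : S (N + K) x - S N x =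
  \sum_(n < N + K) (if (N <= n)%N then a n else 0) * v n x.
Proof.
rewrite /S (big_ord_widen (N + K) (fun n => a n * v n x) (leq_addr K N)).
rewrite [X in _ - X]big_mkcond -sumrB; apply: eq_bigr => n _.
by case: ltnP => _ /=; rewrite ?subrr ?mul0r ?subr0.
Qed.

Let sum_sqr_le_tail N K :
  ((\sum_(n < N + K) (if (N <= n)%N then a n else 0) ^+ 2)%:E
   <= \sum_(N <= n <oo) ((a n ^+ 2)%:E))%E.
Proof.
apply: le_trans (nneseries_lim_ge (N + K) _); last first.
  by move=> n _ _; rewrite lee_fin sqr_ge0.
rewrite sumEFin lee_fin.
rewrite -(big_mkord xpredT (fun n => (if (N <= n)%N then a n else 0) ^+ 2)).
rewrite (@big_cat_nat _ _ _ N 0 (N + K)) //= ?leq_addr //.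
rewrite big_nat_cond big1 ?add0r; last first.
  by move=> n /andP[/andP[_ nN] _]; rewrite leqNgt nN expr0n.
by rewrite le_eqVlt; apply/orP; left; apply/eqP/eq_big_nat => n /andP[-> _].
Qed.

Let integral_sqr_f0_sub_S_le N :
  (\int[mu]_x (((f0 x - S N x) ^+ 2)%R)%:E <= \sum_(N <= n <oo) ((a n ^+ 2)%:E))%E.
Proof.
have gS K : \forall x \ae mu, g (N + K) x - g N x = S (N + K) x - S N x.
  by apply: filterS ae_E => x Ex; rewrite /g indicE mem_set // !mul1r.
have f0g : \forall x \ae mu, f0 x - S N x = f0 x - g N x.
  by apply: filterS (ae_g_eq_S N) => x ->.
rewrite (ae_eq_integral_sqr (measurable_funB measurable_f0 (measurable_S N))
  (measurable_funB measurable_f0 (measurable_g N)) f0g).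
apply: (@integral_sqr_le_of_cvg _ _ _ mu (fun K x => g (N + K) x - g N x)).
- by move=> K; exact: measurable_funB.
- move=> x; apply: cvgB; last exact: cvg_cst.
  have := cvg_g x; rewrite -(cvg_shiftn N); apply: cvg_trans.
  by apply: near_eq_cvg; apply: nearW => K /=; rewrite addnC.
- move=> K; rewrite (ae_eq_integral_sqr
    (measurable_funB (measurable_g _) (measurable_g _))
    (measurable_funB (measurable_S _) (measurable_S _)) (gS K)).
  under eq_integral do rewrite /= S_addn_sub.
  rewrite (integral_sqr_orthonormal_sum _
    (fun n => if (N <= n)%N then a n else 0) _ v_orth).
  exact (sum_sqr_le_tail N K).
Qed.

Hypothesis a_sqr_summable : (\sum_(0 <= n <oo) ((a n ^+ 2)%:E) < +oo)%E.

Let L2norm_f0_sub_S_cvg0 : L2norm mu (f0 \- S N)%R @[N --> \oo] --> 0%E.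
Proof.
pose tail N := (\sum_(N <= n <oo) ((a n ^+ 2)%:E))%E.
have tail_ge0 N : (0 <= tail N)%E.
  by apply: nneseries_ge0 => n _ _; rewrite lee_fin sqr_ge0.
have /fine_cvgP [tail_fin tail_cvg] : tail N @[N --> \oo] --> 0%:E.
  by apply: nneseries_tail_cvg a_sqr_summable _ => n _; rewrite lee_fin sqr_ge0.
have sqrt_tail_cvg : (tail N `^ 2^-1)%E @[N --> \oo] --> 0%:E.
  apply: cvg_EFin.
    by apply: filterS tail_fin => N tN; rewrite -(fineK tN) poweR_EFin.
  have : Num.sqrt (fine (tail N)) @[N --> \oo] --> 0.
    by rewrite -sqrtr0; exact: (continuous_cvg _ (@sqrt_continuous R 0)) tail_cvg.
  apply: cvg_trans; apply: near_eq_cvg; apply: filterS tail_fin => N tN /=.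
  by rewrite -(fineK tN) poweR_EFin /= powR12_sqrt // fine_ge0 // tail_ge0.
apply: (@squeeze_cvge _ _ _ _ (cst 0%E) _ (fun N => tail N `^ 2^-1)%E) => //;
  last exact: cvg_cst.
apply: nearW => N; rewrite Lnorm_ge0 /= L2normE.
apply: gt0_ler_poweR => //; last exact: integral_sqr_f0_sub_S_le.
- by rewrite in_itv /= leey andbT integral_ge0 // => x _; rewrite lee_fin sqr_ge0.
- by rewrite in_itv /= leey andbT.
Qed.

Let inL2_f0 : inL2 mu f0.
Proof.
rewrite /inL2 inE; apply/andP; split; first by rewrite inE; exact: measurable_f0.
rewrite inE /= /finite_norm.
have -> : EFin \o f0 = EFin \o (f0 \- S 0)%R.
  by apply/funext => x; rewrite /= /S big_ord0 subr0.
rewrite -/(L2norm mu _) L2normE; apply: poweR_lty.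
exact: le_lt_trans (integral_sqr_f0_sub_S_le 0) a_sqr_summable.
Qed.

Lemma exists_bounded_L2_limit_of_series : exists f : T -> R, exists B : R,
  [/\ measurable_fun setT f, (forall x, `|f x| <= B), inL2 mu f &
      L2norm mu (f \- fun x => \sum_(n < N) a n * v n x)%R @[N --> \oo] --> 0%E].
Proof. by exists f0, B; split. Qed.

End bounded_orthonormal_series.

Lemma fin_num_of_summable_weighted_sqr (R : realType) (s : nat -> R)
    (L : nat -> \bar R) :
  (forall n, 0 < s n) -> (forall n, (0 <= L n)%E) ->
  (\sum_(0 <= n <oo) ((s n)%:E * L n ^+ 2) < +oo)%E ->
  forall n, L n \is a fin_num.
Proof.
move=> s_gt0 L_ge0 summable n; rewrite ge0_fin_numE // ltey; apply/negP => /eqP Ln.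
have term_ge0 k : xpredT k -> (0 <= (s k)%:E * L k ^+ 2)%E.
  move=> _; apply: mule_ge0; first by rewrite lee_fin ltW.
  by rewrite expe2; apply: mule_ge0.
move: summable; rewrite (nneseries_pinfty term_ge0 (k := n)) ?ltxx //.
by rewrite Ln expe2 mulyy gt0_muley ?lte_fin.
Qed.

Lemma le_mul_AMGM (R : realFieldType) (x y t : R) : 0 < t ->
  x * y <= 2^-1 * (x ^+ 2 / t) + 2^-1 * (t * y ^+ 2).
Proof.
move=> t_gt0; pose z := x / t.
have -> : x = z * t by rewrite /z divfK // gt_eqF.
have -> : (z * t) ^+ 2 / t = z ^+ 2 * t by rewrite exprMn expr2 mulrA mulfK ?gt_eqF.
have := mulr_ge0 (ltW t_gt0) (sqr_ge0 (z - y)).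
nra.
Qed.

Lemma powR2D (R : realType) (s e : R) : 0 < s -> powR s (2 + e) = s ^+ 2 * powR s e.
Proof.
move=> s_gt0; rewrite powRD; last by rewrite (gt_eqF s_gt0) implybT.
by rewrite powR_mulrn // ltW.
Qed.

Section pseudoinverse_coefficients.
Context {R : realType} {d : measure_display} {T : measurableType d}
  {mu : {measure set T -> \bar R}} {Y : normedModType R} {inner : Y -> Y -> R}
  {sigma : nat -> R} {u : nat -> Y} {v : nat -> T -> R} {eta : R}.
Hypothesis sigma_gt0 : forall n, 0 < sigma n.
Hypothesis weighted_Linfnorm_summable :
  (\sum_(0 <= n <oo) ((powR (sigma n) eta)%:E * (Linfnorm mu (v n) ^+ 2)) < +oo)%E.

Let c y n := (sigma n)^-1 * inner y (u n).

Lemma Linfnorm_fin_num n : Linfnorm mu (v n) \is a fin_num.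
Proof.
apply: (@fin_num_of_summable_weighted_sqr _ (fun n => powR (sigma n) eta) _ _ _
  weighted_Linfnorm_summable).
- by move=> k; exact: powR_gt0.
- by move=> k; exact: Lnorm_ge0.
Qed.

Lemma V_eta_sub_U_set : V_eta inner sigma u eta `<=` U_set mu inner sigma u v.
Proof.
move=> y; rewrite /V_eta /U_set /= => Vy.
pose M n := fine (Linfnorm mu (v n)).
have LM n : Linfnorm mu (v n) = (M n)%:E by rewrite fineK // Linfnorm_fin_num.
have M_ge0 n : 0 <= M n by rewrite fine_ge0 // Lnorm_ge0.
pose A n := (`|inner y (u n)| ^+ 2 / powR (sigma n) (2 + eta))%:E.
pose B n := ((powR (sigma n) eta)%:E * (Linfnorm mu (v n) ^+ 2))%E.
have A_ge0 n : (0 <= A n)%E by rewrite lee_fin divr_ge0 ?sqr_ge0 ?powR_ge0.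
have B_ge0 n : (0 <= B n)%E.
  by rewrite /B LM -EFin_expe -EFinM lee_fin mulr_ge0 ?powR_ge0 ?sqr_ge0.
apply: (@le_lt_trans _ _ (\sum_(0 <= n <oo) ((2^-1)%:E * A n + (2^-1)%:E * B n))%E).
  apply: lee_nneseries => n _.
    by rewrite LM -EFinM lee_fin mulr_ge0 // divr_ge0 // ltW.
  rewrite /A /B LM -EFin_expe -!EFinM -EFinD lee_fin.
  rewrite powR2D // invfM [_ ^+ 2 * (_ * _)]mulrA -expr_div_n.
  exact: le_mul_AMGM (powR_gt0 _ (sigma_gt0 n)).
rewrite nneseriesD => [|n _ _|n _ _]; last 2 first.
- exact: mule_ge0.
- exact: mule_ge0.
by rewrite !nneseriesZl // lte_add_pinfty // lte_mul_pinfty // ?lee_fin ?invr_ge0.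
Qed.

Lemma U_set_coef_summable {M : nat -> R} {y : Y} :
  (forall n, Linfnorm mu (v n) = (M n)%:E) -> U_set mu inner sigma u v y ->
  (\sum_(0 <= n <oo) ((`|c y n| * M n)%:E) < +oo)%E.
Proof.
move=> LM; rewrite /U_set /=; congr (_ < _)%E; apply: eq_eseriesr => n _.
by rewrite LM -EFinM /c normrM normfV (gtr0_norm (sigma_gt0 n)) [_^-1 * _]mulrC.
Qed.

Lemma V_eta_coef_sqr_summable {y : Y} :
  (forall n, sigma n.+1 <= sigma n) -> 0 <= eta -> V_eta inner sigma u eta y ->
  (\sum_(0 <= n <oo) ((c y n ^+ 2)%:E) < +oo)%E.
Proof.
move=> sigma_noninc eta_ge0 Vy.
have sigma_le_sigma0 n : sigma n <= sigma 0.
  by elim: n => // n IH; exact: le_trans (sigma_noninc n) IH.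
have term_ge0 n :
    xpredT n -> (0 <= (`|inner y (u n)| ^+ 2 / powR (sigma n) (2 + eta))%:E)%E.
  by move=> _; rewrite lee_fin divr_ge0 ?sqr_ge0 ?powR_ge0.
apply: le_lt_trans (_ : _ <= (powR (sigma 0) eta)%:E * \sum_(0 <= n <oo)
    ((`|inner y (u n)| ^+ 2 / powR (sigma n) (2 + eta))%:E))%E _; last first.
  by rewrite lte_mul_pinfty // lee_fin powR_ge0.
rewrite -nneseriesZl //; apply: lee_nneseries => [n _ _|n _].
  by rewrite lee_fin sqr_ge0.
have -> : c y n ^+ 2 =
    `|inner y (u n)| ^+ 2 / powR (sigma n) (2 + eta) * powR (sigma n) eta.
  rewrite powR2D // real_normK ?num_real // invfM mulrA mulfVK ?gt_eqF ?powR_gt0 //.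
  by rewrite /c exprMn exprVn mulrC.
rewrite -EFinM lee_fin [X in _ <= X]mulrC ler_wpM2l ?divr_ge0 ?sqr_ge0 ?powR_ge0 //.
by apply: ge0_ler_powR => //; rewrite ?nnegrE ltW.
Qed.

End pseudoinverse_coefficients.

Theorem lemma4p10 (R : realType) (d : measure_display) (T : measurableType d)
  (mu : {measure set T -> \bar R})
  (Y : completeNormedModType R) (inner : Y -> Y -> R)
  (A : (T -> R) -> Y) (sigma : nat -> R) (u : nat -> Y) (v : nat -> T -> R)
  (eta : R) :
  is_inner_product inner ->
  separable_space Y ->
  L2_separable mu ->
  is_SVD mu inner A sigma u v ->
  0 <= eta ->
  (\sum_(0 <= n <oo) ((powR (sigma n) eta)%:E * (Linfnorm mu (v n) ^+ 2)) < +oo)%E ->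
  V_eta inner sigma u eta `<=` U_set mu inner sigma u v /\
  (forall y, V_eta inner sigma u eta y ->
     (exists f, is_pinv mu inner sigma u v y f) /\
     (forall f, is_pinv mu inner sigma u v y f -> inLinf mu f)).
Proof.
move=> _ _ _ [sigma_gt0 sigma_noninc _ _ [v_orth _]] eta_ge0 summable.
split=> [|y Vy]; first exact: V_eta_sub_U_set sigma_gt0 summable.
pose M n := fine (Linfnorm mu (v n)).
have LM n : Linfnorm mu (v n) = (M n)%:E.
  by rewrite fineK // (Linfnorm_fin_num sigma_gt0 summable).
have M_ge0 n : 0 <= M n by rewrite fine_ge0 // Lnorm_ge0.
have Uy := V_eta_sub_U_set sigma_gt0 summable y Vy.
have [f0 [B [mf0 f0_le_B f0_L2 f0_cvg]]] := exists_bounded_L2_limit_of_series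
  v_orth M_ge0 (fun n => Linfnorm_ae_le (LM n)) (U_set_coef_summable sigma_gt0 LM Uy)
  (V_eta_coef_sqr_summable sigma_gt0 sigma_noninc eta_ge0 Vy).
split=> [|f [f_L2 f_cvg]]; first by exists f0.
have mf := measurable_inL2 f_L2.
apply: (inLinf_ae_bounded mf f0_le_B).
exact: L2_limit_ae_unique mf mf0
  (fun N => measurable_orthonormal_sum v (fun n => (sigma n)^-1 * inner y (u n)) N v_orth)
  f_cvg f0_cvg.
Qed.
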